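(* For every prae-dilator $T$, the linear order $\operatorname{BH}(T)$ is a Bachmann-Howard fixed point of $T$, i.e. there exists a Bachmann-Howard collapse $\vartheta:T_{\operatorname{BH}(T)}\to\operatorname{BH}(T)$.
   Context: The finite subset functor $[\cdot]^{<\omega}$ sends a set $X$ to the set of its finite subsets and a function $f$ to $[f]^{<\omega}(a)=\{f(x)\mid x\in a\}$; subsets of linear orders are regarded as suborders. A prae-dilator consists of an endofunctor $X\mapsto T_X$ on the category of linear orders (morphisms: order embeddings) and a natural transformation $\operatorname{supp}^T:T\Rightarrow[\cdot]^{<\omega}$ such that for every linear order $X$ and every $\sigma\in T_X$ we have $\sigma\in\operatorname{rng}(T_{\iota_\sigma})$, where $\iota_\sigma:\operatorname{supp}^T_X(\sigma)\hookrightarrow X$ is the inclusion. For a linear order $Z$ and finite $a,b\subseteq Z$ write $a<^{\operatorname{fin}}_Z b$ iff for every $s\in a$ there is $t\in b$ with $s<_Z t$; $\leq^{\operatorname{fin}}_Z$ is defined analogously with $\leq_Z$; singletons $\{s\}$ are written $s$. A function $\vartheta:T_Y\to Y$ ($Y$ a linear order) is a Bachmann-Howard collapse if for all $\sigma,\tau\in T_Y$: (1) if $\sigma<_{T_Y}\tau$ and $\operatorname{supp}^T_Y(\sigma)<^{\operatorname{fin}}_Y\vartheta(\tau)$ then $\vartheta(\sigma)<_Y\vartheta(\tau)$; (2) $\operatorname{supp}^T_Y(\sigma)<^{\operatorname{fin}}_Y\vartheta(\sigma)$. If such a function exists, $Y$ is a Bachmann-Howard fixed point of $T$. Construction of $\operatorname{BH}(T)$: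 for a linear order $X$ let $\vartheta_T(X)$ be the set of formal terms $\vartheta\sigma$ with $\sigma\in T_X$. A Bachmann-Howard system is a triple $(X,\iota_X,L_X)$ with $X$ a linear order, $\iota_X:X\to\vartheta_T(X)$ and $L_X:X\to\omega$ functions, such that $L_{\vartheta_T(X)}\circ\iota_X=L_X$, where $L_{\vartheta_T(X)}(\vartheta\sigma):=\max\{L_X(x)\mid x\in\operatorname{supp}^T_X(\sigma)\}+1$ (maximum of the empty set is $0$). For such a system define the linear order $\vartheta\sigma<_{\vartheta_T(X)}\vartheta\tau$ by recursion on $L_{\vartheta_T(X)}(\vartheta\sigma)+L_{\vartheta_T(X)}(\vartheta\tau)$ to hold iff either (a) $\sigma<_{T_X}\tau$ and $[\iota_X]^{<\omega}(\operatorname{supp}^T_X(\sigma))<^{\operatorname{fin}}_{\vartheta_T(X)}\vartheta\tau$, or (b) $\tau<_{T_X}\sigma$ and $\vartheta\sigma\leq^{\operatorname{fin}}_{\vartheta_T(X)}[\iota_X]^{<\omega}(\operatorname{supp}^T_X(\tau))$. The system is good if $\iota_X$ is an order embedding; then define $\iota_{\vartheta_T(X)}(\vartheta\sigma)=\vartheta\,T_{\iota_X}(\sigma)$, and $(\vartheta_T(X),\iota_{\vartheta_T(X)},L_{\vartheta_T(X)})$ is again a good Bachmann-Howard system. Let $(X_0,\iota_{X_0},L_{X_0})=(\emptyset,\emptyset,\emptyset)$ and $(X_{n+1},\iota_{X_{n+1}},L_{X_{n+1}})=(\vartheta_T(X_n),\iota_{\vartheta_T(X_n)},L_{\vartheta_T(X_n)})$.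 Then $\operatorname{BH}(T)$ is the direct limit of the linear orders $X_n$ along the order embeddings $\iota_{X_n}:X_n\to X_{n+1}$. *)

From Stdlib Require Import List ClassicalEpsilon ProofIrrelevance.
Import ListNotations.

Set Implicit Arguments.

Record strict_linear {A : Type} (R : A -> A -> Prop) : Prop := {
  sl_irrefl : forall x, ~ R x x;
  sl_trans : forall x y z, R x y -> R y z -> R x z;
  sl_total : forall x y, R x y \/ x = y \/ R y x }.

Record LO := mkLO { car :> Type; olt : car -> car -> Prop; olt_linear : strict_linear olt }.
Arguments olt {_}.

Record emb (X Y : LO) := mkEmb {
  emb_fun :> X -> Y;
  emb_spec : forall x y, olt x y <-> olt (emb_fun x) (emb_fun y) }.

Definition emb_id (X : LO) : emb X X :=
  @mkEmb X X (fun x => x) (fun x y => iff_refl _).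

Definition emb_comp (X Y Z : LO) (g : emb Y Z) (f : emb X Y) : emb X Z :=
  @mkEmb X Z (fun x => g (f x))
    (fun x y => iff_trans (emb_spec f x y) (emb_spec g (f x) (f y))).

Definition sub_lt (X : LO) (P : X -> Prop) (a b : {x : X | P x}) : Prop :=
  olt (proj1_sig a) (proj1_sig b).

Lemma sub_lt_linear (X : LO) (P : X -> Prop) : strict_linear (@sub_lt X P).
Proof.
  destruct (olt_linear X) as [Hi Ht Hto].
  split.
  - intros [x px]; unfold sub_lt; simpl; apply Hi.
  - intros [x px] [y py] [z pz]; unfold sub_lt; simpl; apply Ht.
  - intros [x px] [y py]; unfold sub_lt; simpl.
    destruct (Hto x y) as [H|[H|H]]; auto.
    right; left; subst y; f_equal; apply proof_irrelevance.
Qed.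

Definition subLO (X : LO) (P : X -> Prop) : LO :=
  @mkLO {x : X | P x} (@sub_lt X P) (@sub_lt_linear X P).

Definition sub_incl (X : LO) (P : X -> Prop) : emb (subLO X P) X :=
  @mkEmb (subLO X P) X (fun a => proj1_sig a) (fun a b => iff_refl _).

Lemma empty_linear : strict_linear (fun x y : Empty_set => False).
Proof. split; intros x; destruct x. Qed.

Definition emptyLO : LO := @mkLO Empty_set (fun _ _ => False) empty_linear.

(** Finite subsets of [Z] are presented by lists; only membership is ever used. *)
Definition fin_lt (A : Type) (R : A -> A -> Prop) (a b : list A) : Prop :=
  forall s, In s a -> exists t, In t b /\ R s t.
Definition fin_le (A : Type) (R : A -> A -> Prop) (a b : list A) : Prop :=
  forall s, In s a -> exists t, In t b /\ (s = t \/ R s t).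

Record PraeDilator := {
  Tob :> LO -> LO;
  Tmap : forall X Y : LO, emb X Y -> emb (Tob X) (Tob Y);
  Tmap_id : forall (X : LO) (s : Tob X), Tmap (emb_id X) s = s;
  Tmap_comp : forall (X Y Z : LO) (f : emb X Y) (g : emb Y Z) (s : Tob X),
      Tmap (emb_comp g f) s = Tmap g (Tmap f s);
  supp : forall X : LO, Tob X -> list X;
  supp_nat : forall (X Y : LO) (f : emb X Y) (s : Tob X) (y : Y),
      In y (supp Y (Tmap f s)) <-> exists x, In x (supp X s) /\ f x = y;
  supp_cond : forall (X : LO) (s : Tob X),
      exists t : Tob (subLO X (fun x => In x (supp X s))),
        Tmap (@sub_incl X (fun x => In x (supp X s))) t = s }.

Arguments Tmap p {X Y} f.
Arguments supp p {X} s.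

Definition BH_collapse (T : PraeDilator) (Y : LO) (th : T Y -> Y) : Prop :=
  (forall s t : T Y, olt s t -> fin_lt olt (supp T s) [th t] -> olt (th s) (th t)) /\
  (forall s : T Y, fin_lt olt (supp T s) [th s]).

Definition BH_fixed_point (T : PraeDilator) (Y : LO) : Prop :=
  exists th : T Y -> Y, BH_collapse T Y th.

Section Construction.
Unset Implicit Arguments.
Variable T : PraeDilator.

Definition maxl (l : list nat) : nat := fold_right Nat.max 0 l.

Section Theta.
Variables (X : LO) (io : X -> T X) (L : X -> nat).

(** L_{theta_T(X)}(theta s) = max { L_X(x) | x in supp s } + 1 ; the formal term
    theta s is represented by s itself. *)
Definition Ltheta (s : T X) : nat := S (maxl (map L (supp T s))).

(** The order on theta_T(X), defined by recursion on L(theta s) + L(theta t);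
    [vr k] is the recursion with [k] units of fuel. *)
Fixpoint vr (k : nat) (s t : T X) : Prop :=
  match k with
  | 0 => False
  | S k' =>
      (olt s t /\ fin_lt (vr k') (map io (supp T s)) [t]) \/
      (olt t s /\ fin_le (vr k') [s] (map io (supp T t)))
  end.

Definition vrel (s t : T X) : Prop := vr (Ltheta s + Ltheta t) s t.

Record good_sys : Prop := {
  gs_L : forall x, Ltheta (io x) = L x;
  gs_emb : forall x y, olt x y <-> vrel (io x) (io y) }.
End Theta.

Record GBH := { gX : LO; gio : gX -> T gX; gL : gX -> nat; ggood : @good_sys gX gio gL }.

Definition vrelS (B : GBH) := vrel (gX B) (gio B) (gL B).

Definition thetaLO (B : GBH) (H : strict_linear (vrelS B)) : LO :=
  @mkLO (T (gX B)) (vrelS B) H.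

Definition ioemb (B : GBH) H : emb (gX B) (thetaLO B H) :=
  @mkEmb (gX B) (thetaLO B H) (gio B) (gs_emb _ _ _ (ggood B)).

Definition nio (B : GBH) H : thetaLO B H -> T (thetaLO B H) := Tmap T (ioemb B H).
Definition nL (B : GBH) H : thetaLO B H -> nat := Ltheta (gX B) (gL B).

(* The step X |-> theta_T(X).  By the paper, the side conditions tested below
   always hold; the fallback branches (which keep the old stage) never fire. *)
Definition step2 (B : GBH) H
  (q : {@good_sys _ (nio B H) (nL B H)} + {~ @good_sys _ (nio B H) (nL B H)}) : GBH :=
  match q with
  | left G => @Build_GBH (thetaLO B H) (nio B H) (nL B H) G
  | right _ => B
  end.

Definition conn2 (B : GBH) H q : gX B -> gX (@step2 B H q) :=
  match q as q0 return gX B -> gX (@step2 B H q0) with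
  | left _ => @gio B
  | right _ => fun x => x
  end.

Definition step1 (B : GBH)
  (p : {strict_linear (vrelS B)} + {~ strict_linear (vrelS B)}) : GBH :=
  match p with
  | left H => @step2 B H (excluded_middle_informative _)
  | right _ => B
  end.

Definition conn1 (B : GBH) p : gX B -> gX (@step1 B p) :=
  match p as p0 return gX B -> gX (@step1 B p0) with
  | left H => @conn2 B H (excluded_middle_informative _)
  | right _ => fun x => x
  end.

Definition step (B : GBH) : GBH := step1 B (excluded_middle_informative _).
Definition conn (B : GBH) : gX B -> gX (step B) := conn1 B (excluded_middle_informative _).

Definition good0 : @good_sys emptyLO (fun x : Empty_set => match x with end)
                                            (fun x : Empty_set => match x with end).
Proof. split; intros x; destruct x. Qed.

Definition stage0 : GBH := @Build_GBH emptyLO _ _ good0.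

Fixpoint stage (n : nat) : GBH :=
  match n with 0 => stage0 | S m => step (stage m) end.

Inductive lifts (n : nat) (x : gX (stage n)) : forall k, gX (stage k) -> Prop :=
  | lifts_refl : lifts n x n x
  | lifts_step : forall k (y : gX (stage k)),
      lifts n x k y -> lifts n x (S k) (conn (stage k) y).

(** Direct limit: each class is represented by its unique element at the least
    stage where it occurs (not in the image of the previous iota). *)
Definition fresh (n : nat) : gX (stage n) -> Prop :=
  match n as n0 return gX (stage n0) -> Prop with
  | 0 => fun _ => True
  | S m => fun x => forall y, conn (stage m) y <> x
  end.

Definition BHcar : Type :=
  { p : { n : nat & gX (stage n) } | fresh (projT1 p) (projT2 p) }.

Definition BHlt (a b : BHcar) : Prop :=
  exists k (x y : gX (stage k)),
    lifts (projT1 (proj1_sig a)) (projT2 (proj1_sig a)) k x /\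
    lifts (projT1 (proj1_sig b)) (projT2 (proj1_sig b)) k y /\ olt x y.

(** BH(T); the paper shows the direct limit is a linear order, so the
    fallback branch never fires. *)
Definition BH : LO :=
  match excluded_middle_informative (strict_linear BHlt) with
  | left H => @mkLO BHcar BHlt H
  | right _ => emptyLO
  end.

End Construction.

(* The order on theta_T(X) is defined by recursion on heights, and for a good Bachmann-Howard
   system each axiom of a strict linear order follows by induction on the sum of the heights
   involved.  Two facts drive these inductions: iota x lies below theta s for every x in the
   support of s, and theta s never lies at or below one of its hereditary subterms.  Hence each
   stage X_(n+1) = theta_T(X_n) is again good, the iota's are embeddings, and the direct limit
   BH(T) is a linear order into which every X_n embeds.  By the support condition an element s
   of T_BH(T) comes from some sigma in T_(X_n); its collapse is the image of the term theta sigma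
   of X_(n+1), which does not depend on n.  The first collapse condition is then clause (a) of the
   order on theta_T(X_n), the second is iota x < theta sigma for x in supp sigma. *)

From Stdlib Require Import Arith List Lia Classical ClassicalEpsilon ProofIrrelevance
  FunctionalExtensionality Eqdep_dec.

Lemma maxl_ge (l : list nat) (x : nat) : In x l -> x <= maxl l.
Proof.
  induction l as [|a l IH]; simpl; intros H; [contradiction|].
  destruct H as [<-|H]; [lia|]. specialize (IH H); lia.
Qed.

Lemma maxl_incl (l l' : list nat) : incl l l' -> maxl l <= maxl l'.
Proof.
  induction l as [|a l IH]; simpl; intros H; [lia|].
  apply Nat.max_lub.
  - apply maxl_ge, H; left; reflexivity.
  - apply IH; intros v Hv; apply H; right; exact Hv.
Qed.

Lemma emb_inj (X Y : LO) (f : emb X Y) (x y : X) : f x = f y -> x = y.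
Proof.
  intros E. destruct (sl_total (olt_linear X) x y) as [h|[h|h]]; auto;
    apply (emb_spec f) in h; rewrite E in h; destruct (sl_irrefl (olt_linear Y) _ h).
Qed.

Lemma emb_eq (X Y : LO) (f g : emb X Y) : (forall x, f x = g x) -> f = g.
Proof.
  destruct f as [f pf], g as [g pg]; simpl; intros E.
  assert (f = g) as <- by (apply functional_extensionality; exact E).
  f_equal; apply proof_irrelevance.
Qed.

(* By the support condition [s] comes from its support, which lies in the range of [f]. *)
Lemma Tmap_range (T : PraeDilator) (X Y : LO) (f : emb X Y) (s : T Y) :
  (forall y, In y (supp T s) -> exists x, f x = y) -> exists s', Tmap T f s' = s.
Proof.
  intros Hrange. destruct (supp_cond T Y s) as [t Ht].
  set (P := fun y : Y => In y (supp T s)) in *.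
  set (g := fun a : subLO Y P =>
              proj1_sig (constructive_indefinite_description _ (Hrange _ (proj2_sig a)))).
  assert (Hg : forall a, f (g a) = proj1_sig a).
  { intros a; unfold g; destruct (constructive_indefinite_description _ _); assumption. }
  assert (Hg_emb : forall a b : subLO Y P, olt a b <-> olt (g a) (g b)).
  { intros a b. change (olt (proj1_sig a) (proj1_sig b) <-> olt (g a) (g b)).
    rewrite (emb_spec f), !Hg. reflexivity. }
  exists (Tmap T (mkEmb _ _ g Hg_emb) t).
  rewrite <- Tmap_comp.
  replace (emb_comp f (mkEmb _ _ g Hg_emb)) with (sub_incl Y P)
    by (apply emb_eq; intros a; symmetry; apply Hg).
  exact Ht.
Qed.

Section BachmannHowardSystem.
Variable T : PraeDilator.
Variables (X : LO) (io : X -> T X) (L : X -> nat).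
Hypothesis L_io : forall x, Ltheta T X L (io x) = L x.

Notation Lt := (Ltheta T X L).
Notation R := (vrel T X io L).

Lemma Ltheta_supp x s : In x (supp T s) -> Lt (io x) < Lt s.
Proof. intros H. rewrite L_io. unfold Ltheta. apply le_n_S, maxl_ge, in_map, H. Qed.

Lemma vr_fuel_mono k1 k2 s t :
  Lt s + Lt t <= k1 -> Lt s + Lt t <= k2 -> vr T X io k1 s t -> vr T X io k2 s t.
Proof.
  revert k2 s t. induction k1 as [|k1 IH]; intros k2 s t H1 H2; [unfold Ltheta in H1; lia|].
  destruct k2 as [|k2]; [unfold Ltheta in H2; lia|].
  simpl; unfold fin_lt, fin_le.
  intros [[A B]|[A B]]; [left|right]; split; auto; intros u Hu;
    destruct (B u Hu) as [v [Hv Hr]]; exists v; split; auto.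
  - destruct Hv as [<-|[]].
    apply in_map_iff in Hu; destruct Hu as [x [<- Hx]].
    pose proof (Ltheta_supp x s Hx). apply (IH k2); [lia|lia|exact Hr].
  - destruct Hu as [<-|[]].
    apply in_map_iff in Hv; destruct Hv as [y [<- Hy]].
    pose proof (Ltheta_supp y t Hy). destruct Hr as [E|Hr]; [left; exact E|right].
    apply (IH k2); [lia|lia|exact Hr].
Qed.

Lemma vr_vrel k s t : Lt s + Lt t <= k -> (vr T X io k s t <-> R s t).
Proof. intros Hk; split; apply vr_fuel_mono; lia. Qed.

Lemma vrel_unfold s t : R s t <->
  (olt s t /\ (forall x, In x (supp T s) -> R (io x) t)) \/
  (olt t s /\ exists y, In y (supp T t) /\ (s = io y \/ R s (io y))).
Proof.
  unfold vrel at 1.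
  remember (Lt s + Lt t - 1) as k eqn:Ek.
  replace (Lt s + Lt t) with (S k) by (unfold Ltheta in *; lia).
  simpl vr; unfold fin_lt, fin_le. split.
  - intros [[A B]|[A B]]; [left|right]; split; auto.
    + intros x Hx. destruct (B (io x) (in_map _ _ _ Hx)) as [v [[<-|[]] Hr]].
      pose proof (Ltheta_supp x s Hx). apply (vr_vrel k); [lia|exact Hr].
    + destruct (B s (or_introl eq_refl)) as [v [Hv Hr]].
      apply in_map_iff in Hv; destruct Hv as [y [<- Hy]].
      exists y; split; auto. pose proof (Ltheta_supp y t Hy).
      destruct Hr as [E|Hr]; [left; exact E|right; apply (vr_vrel k); [lia|exact Hr]].
  - intros [[A B]|[A [y [Hy Hr]]]]; [left|right]; split; auto.
    + intros u Hu. apply in_map_iff in Hu; destruct Hu as [x [<- Hx]].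
      exists t; split; [left; reflexivity|]. pose proof (Ltheta_supp x s Hx).
      apply (vr_vrel k); [lia|exact (B x Hx)].
    + intros u [<-|[]]. exists (io y); split; [apply in_map, Hy|].
      pose proof (Ltheta_supp y t Hy).
      destruct Hr as [E|Hr]; [left; exact E|right; apply (vr_vrel k); [lia|exact Hr]].
Qed.

Lemma vrel_irrefl s : ~ R s s.
Proof.
  intros H; apply vrel_unfold in H.
  destruct H as [[A _]|[A _]]; exact (sl_irrefl (olt_linear _) _ A).
Qed.

Inductive subterm : T X -> T X -> Prop :=
  | subterm_supp s x : In x (supp T s) -> subterm s (io x)
  | subterm_step s x u : In x (supp T s) -> subterm (io x) u -> subterm s u.

Lemma subterm_Ltheta s u : subterm s u -> Lt u < Lt s.
Proof.
  intros Hsub; induction Hsub as [s x Hx|s x u Hx _ IH]; pose proof (Ltheta_supp x s Hx); lia.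
Qed.

Lemma subterm_supp_r s u y : subterm s u -> In y (supp T u) -> subterm s (io y).
Proof.
  intros Hsub; induction Hsub as [s x Hx|s x u Hx _ IH]; intros Hy.
  - exact (subterm_step s x (io y) Hx (subterm_supp _ y Hy)).
  - exact (subterm_step s x (io y) Hx (IH Hy)).
Qed.

Lemma subterm_not_above s u : subterm s u -> ~ (s = u \/ R s u).
Proof.
  remember (Lt s + Lt u) as n eqn:En. revert s u En.
  induction n as [n IH] using lt_wf_ind. intros s u En Hsub [E|Hr].
  { subst u. apply subterm_Ltheta in Hsub; lia. }
  apply vrel_unfold in Hr. destruct Hr as [[_ B]|[_ [y [Hy Hr]]]].
  - revert En B. destruct Hsub as [s x Hx|s x u Hx Hsub]; intros En B.
    + exact (vrel_irrefl _ (B x Hx)).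
    + pose proof (Ltheta_supp x s Hx).
      exact (IH (Lt (io x) + Lt u) ltac:(lia) (io x) u eq_refl Hsub (or_intror (B x Hx))).
  - pose proof (Ltheta_supp y u Hy).
    exact (IH (Lt s + Lt (io y)) ltac:(lia) s (io y) eq_refl (subterm_supp_r s u y Hsub Hy) Hr).
Qed.

Lemma vrel_subterm s u : subterm s u -> R u s.
Proof.
  remember (Lt s + Lt u) as n eqn:En. revert s u En.
  induction n as [n IH] using lt_wf_ind. intros s u En Hsub.
  pose proof (subterm_Ltheta s u Hsub).
  apply vrel_unfold.
  destruct (sl_total (olt_linear (T X)) s u) as [A|[<-|A]]; [right| lia |left]; split; auto.
  - destruct Hsub as [s x Hx|s x u Hx Hsub]; exists x; split; auto.
    pose proof (Ltheta_supp x s Hx).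
    right; exact (IH (Lt (io x) + Lt u) ltac:(lia) (io x) u eq_refl Hsub).
  - intros y Hy. pose proof (Ltheta_supp y u Hy).
    exact (IH (Lt s + Lt (io y)) ltac:(lia) s (io y) eq_refl (subterm_supp_r s u y Hsub Hy)).
Qed.

Lemma vrel_supp x s : In x (supp T s) -> R (io x) s.
Proof. intros Hx; apply vrel_subterm, subterm_supp, Hx. Qed.

Lemma vrel_total s t : R s t \/ s = t \/ R t s.
Proof.
  remember (Lt s + Lt t) as n eqn:En. revert s t En.
  induction n as [n IH] using lt_wf_ind. intros s t En.
  destruct (sl_total (olt_linear (T X)) s t) as [A|[E|A]]; auto.
  - destruct (classic (forall x, In x (supp T s) -> R (io x) t)) as [B|B].
    + left; apply vrel_unfold; left; auto.
    + apply not_all_ex_not in B; destruct B as [x B].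
      apply imply_to_and in B; destruct B as [Hx B].
      pose proof (Ltheta_supp x s Hx).
      right; right; apply vrel_unfold; right; split; auto. exists x; split; auto.
      destruct (IH (Lt (io x) + Lt t) ltac:(lia) (io x) t eq_refl) as [C|[C|C]];
        auto; contradiction.
  - destruct (classic (forall x, In x (supp T t) -> R (io x) s)) as [B|B].
    + right; right; apply vrel_unfold; left; auto.
    + apply not_all_ex_not in B; destruct B as [x B].
      apply imply_to_and in B; destruct B as [Hx B].
      pose proof (Ltheta_supp x t Hx).
      left; apply vrel_unfold; right; split; auto. exists x; split; auto.
      destruct (IH (Lt s + Lt (io x)) ltac:(lia) s (io x) eq_refl) as [C|[C|C]];
        auto; contradiction.
Qed.

Lemma vrel_trans s t r : R s t -> R t r -> R s r.
Proof.
  remember (Lt s + Lt t + Lt r) as n eqn:En. revert s t r En.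
  induction n as [n IH] using lt_wf_ind. intros s t r En Hst Htr.
  pose proof (sl_trans (olt_linear (T X))) as Otrans.
  assert (below_supp : forall y, In y (supp T r) -> t = io y \/ R t (io y) -> R s (io y)).
  { intros y Hy [<-|Hty]; [exact Hst|].
    pose proof (Ltheta_supp y r Hy).
    exact (IH (Lt s + Lt t + Lt (io y)) ltac:(lia) s t (io y) eq_refl Hst Hty). }
  pose proof Hst as Hst'; pose proof Htr as Htr'.
  apply vrel_unfold in Hst', Htr'.
  destruct Hst' as [[A1 B1]|[A1 [m [Hm C1]]]].
  - destruct Htr' as [[A2 B2]|[A2 [y [Hy C2]]]].
    + apply vrel_unfold; left; split; [exact (Otrans _ _ _ A1 A2)|]. intros x Hx.
      pose proof (Ltheta_supp x s Hx).
      exact (IH (Lt (io x) + Lt t + Lt r) ltac:(lia) (io x) t r eq_refl (B1 x Hx) Htr).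
    + destruct (sl_total (olt_linear (T X)) s r) as [A|[<-|A]].
      * apply vrel_unfold; left; split; auto. intros x Hx.
        pose proof (Ltheta_supp x s Hx).
        exact (IH (Lt (io x) + Lt t + Lt r) ltac:(lia) (io x) t r eq_refl (B1 x Hx) Htr).
      * destruct (subterm_not_above s (io y) (subterm_supp s y Hy)).
        right; exact (below_supp y Hy C2).
      * apply vrel_unfold; right; split; auto. exists y; split; [exact Hy|].
        right; exact (below_supp y Hy C2).
  - destruct Htr' as [[A2 B2]|[A2 [y [Hy C2]]]].
    + destruct C1 as [->|C1]; [exact (B2 m Hm)|].
      pose proof (Ltheta_supp m t Hm).
      exact (IH (Lt s + Lt (io m) + Lt r) ltac:(lia) s (io m) r eq_refl C1 (B2 m Hm)).
    + apply vrel_unfold; right; split; [exact (Otrans _ _ _ A2 A1)|].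
      exists y; split; [exact Hy|].
      right; exact (below_supp y Hy C2).
Qed.

Lemma vrel_linear : strict_linear R.
Proof. split; [exact vrel_irrefl | exact vrel_trans | exact vrel_total]. Qed.

End BachmannHowardSystem.

Section ThetaStep.
Variables (T : PraeDilator) (B : GBH T) (H : strict_linear (vrelS T B)).

Let L_io : forall x, Ltheta T (gX T B) (gL T B) (gio T B x) = gL T B x :=
  gs_L _ _ _ _ (ggood T B).
Notation Lt := (Ltheta T (gX T B) (gL T B)).

Lemma theta_step_L s : Ltheta T (thetaLO T B H) (nL T B H) (nio T B H s) = nL T B H s.
Proof.
  assert (same : forall v, In v (map (nL T B H) (supp T (nio T B H s))) <->
                           In v (map (gL T B) (supp T s))).
  { intros v; rewrite !in_map_iff; split.
    - intros [u [<- Hu]]. apply (supp_nat T) in Hu. destruct Hu as [x [Hx <-]].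
      exists x; split; [symmetry; apply L_io | exact Hx].
    - intros [x [<- Hx]]. exists (gio T B x).
      split; [apply L_io | apply (supp_nat T); exists x; split; auto]. }
  change (nL T B H s) with (Ltheta T (gX T B) (gL T B) s). unfold Ltheta.
  f_equal. apply Nat.le_antisymm; apply maxl_incl; intros v; apply same.
Qed.

Lemma theta_step_good : good_sys T (thetaLO T B H) (nio T B H) (nL T B H).
Proof.
  split; [exact theta_step_L|].
  intros s t. remember (Lt s + Lt t) as n eqn:En. revert s t En.
  induction n as [n IH] using lt_wf_ind. intros s t En.
  change (olt s t) with (vrel T (gX T B) (gio T B) (gL T B) s t).
  rewrite (vrel_unfold T _ _ _ L_io), (vrel_unfold T _ _ _ theta_step_L).
  unfold nio; rewrite <- !(emb_spec (Tmap T (ioemb T B H))).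
  split; intros [[A Hsupp]|[A [y [Hy C]]]]; [left|right|left|right]; split; auto.
  - intros v Hv. apply (supp_nat T) in Hv. destruct Hv as [x [Hx <-]].
    pose proof (Ltheta_supp T _ _ _ L_io x s Hx).
    apply (IH (Lt (gio T B x) + Lt t) ltac:(lia) _ t eq_refl), Hsupp, Hx.
  - exists (gio T B y). split; [apply (supp_nat T); exists y; auto|].
    destruct C as [<-|C]; [left; reflexivity|right].
    pose proof (Ltheta_supp T _ _ _ L_io y t Hy).
    apply (IH (Lt s + Lt (gio T B y)) ltac:(lia) s _ eq_refl), C.
  - intros x Hx. pose proof (Ltheta_supp T _ _ _ L_io x s Hx).
    apply (IH (Lt (gio T B x) + Lt t) ltac:(lia) _ t eq_refl), Hsupp.
    apply (supp_nat T); exists x; auto.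
  - apply (supp_nat T) in Hy. destruct Hy as [x [Hx <-]].
    exists x; split; [exact Hx|].
    destruct C as [C|C]; [left; exact (emb_inj _ _ (Tmap T (ioemb T B H)) _ _ C)|right].
    pose proof (Ltheta_supp T _ _ _ L_io x t Hx).
    apply (IH (Lt s + Lt (gio T B x)) ltac:(lia) s _ eq_refl), C.
Qed.

End ThetaStep.

Lemma conn_emb (T : PraeDilator) (B : GBH T) (x y : gX T B) :
  olt x y <-> olt (conn T B x) (conn T B y).
Proof.
  unfold conn, step, conn1, step1.
  destruct (excluded_middle_informative (strict_linear (vrelS T B))) as [H|H]; [|reflexivity].
  unfold conn2, step2. destruct (excluded_middle_informative _); [|reflexivity].
  apply (gs_emb _ _ _ _ (ggood T B)).
Qed.

Definition cemb (T : PraeDilator) (B : GBH T) : emb (gX T B) (gX T (step T B)) :=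
  mkEmb _ _ (conn T B) (conn_emb T B).

(* [step] is the passage to theta_T(X), identified via [phi]: its fallback branches never fire.
   The embedding [c] is abstracted because [cemb] mentions [conn_emb], whose proof blocks the
   case analysis on [step]. *)
Lemma step_spec (T : PraeDilator) (B : GBH T) (c : emb (gX T B) (gX T (step T B))) :
  (forall x, c x = conn T B x) ->
  exists phi : T (gX T B) -> gX T (step T B),
    (forall x, conn T B x = phi (gio T B x)) /\
    (forall s t, vrelS T B s t <-> olt (phi s) (phi t)) /\
    (forall s, gio T (step T B) (phi s) = Tmap T c s).
Proof.
  pose proof (vrel_linear T _ _ _ (gs_L _ _ _ _ (ggood T B))) as Hlin.
  revert c. unfold conn, step, conn1, step1.
  destruct (excluded_middle_informative (strict_linear (vrelS T B))) as [H|H];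
    [|contradiction].
  unfold conn2, step2. destruct (excluded_middle_informative _) as [G|G];
    [|destruct (G (theta_step_good T B H))].
  intros c Hc. exists (fun s => s). split; [|split]; [reflexivity|reflexivity|].
  intros s. replace c with (ioemb T B H) by (apply emb_eq; intros x; symmetry; apply Hc).
  reflexivity.
Qed.

Section DirectLimit.
Variable T : PraeDilator.
Notation X n := (gX T (stage T n)).
Notation idx a := (projT1 (proj1_sig a)).
Notation el a := (projT2 (proj1_sig a)).

Fixpoint lift (n d : nat) : emb (X n) (X (d + n)) :=
  match d as d0 return emb (X n) (X (d0 + n)) with
  | 0 => emb_id (X n)
  | S d' => emb_comp (cemb T (stage T (d' + n))) (lift n d')
  end.

Lemma lifts_lift n x d : lifts T n x (d + n) (lift n d x).
Proof. induction d as [|d IH]; [constructor | exact (lifts_step T n x _ _ IH)]. Qed.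

Lemma lifts_ex n x k : n <= k -> exists y, lifts T n x k y.
Proof.
  intros Hk. replace k with (k - n + n) by lia.
  exists (lift n (k - n) x); apply lifts_lift.
Qed.

Lemma lifts_eq n x d y : lifts T n x (d + n) y -> y = lift n d x.
Proof.
  assert (char : forall k y, lifts T n x k y ->
            exists e, existT (fun k => X k) k y = existT _ (e + n) (lift n e x)).
  { intros k z Hz; induction Hz as [|k z _ [e E]]; [exists 0; reflexivity|].
    exists (S e).
    exact (f_equal (fun p : {k : nat & X k} =>
                      existT (fun k => X k) (S (projT1 p))
                        (conn T (stage T (projT1 p)) (projT2 p))) E). }
  intros Hy. destruct (char _ _ Hy) as [d' E].
  assert (d' = d) as -> by (apply (f_equal (@projT1 _ _)) in E; simpl in E; lia).
  exact (inj_pair2_eq_dec _ Nat.eq_dec _ _ _ _ E).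
Qed.

Lemma lifts_le n x k y : lifts T n x k y -> n <= k.
Proof. induction 1; lia. Qed.

Lemma lifts_uniq n x k y y' : lifts T n x k y -> lifts T n x k y' -> y = y'.
Proof.
  intros Hy Hy'. pose proof (lifts_le _ _ _ _ Hy).
  assert (exists d, k = d + n) as [d ->] by (exists (k - n); lia).
  rewrite (lifts_eq _ _ _ _ Hy), (lifts_eq _ _ _ _ Hy'). reflexivity.
Qed.

Lemma lifts_olt k x y k' x' y' :
  lifts T k x k' x' -> lifts T k y k' y' -> (olt x y <-> olt x' y').
Proof.
  intros Hx Hy. pose proof (lifts_le _ _ _ _ Hx).
  assert (exists d, k' = d + k) as [d ->] by (exists (k' - k); lia).
  rewrite (lifts_eq _ _ _ _ Hx), (lifts_eq _ _ _ _ Hy). apply emb_spec.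
Qed.

(* The element of the direct limit represented by [x], i.e. its preimage at the earliest stage. *)
Fixpoint canon (n : nat) : X n -> BHcar T :=
  match n as n0 return X n0 -> BHcar T with
  | 0 => fun x => exist _ (existT (fun k => X k) 0 x) I
  | S m => fun x =>
      match excluded_middle_informative (exists y, conn T (stage T m) y = x) with
      | left e => canon m (proj1_sig (constructive_indefinite_description _ e))
      | right ne => exist (fun p : {k : nat & X k} => fresh T (projT1 p) (projT2 p))
                      (existT (fun k => X k) (S m) x) (fun y E => ne (ex_intro _ y E))
      end
  end.

Lemma canon_lifts n x : lifts T (idx (canon n x)) (el (canon n x)) n x.
Proof.
  induction n as [|n IH]; simpl; [constructor|].
  destruct (excluded_middle_informative _) as [e|e]; [|constructor].
  destruct (constructive_indefinite_description _ e) as [y <-]; simpl.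
  constructor; apply IH.
Qed.

Lemma canon_conn n x : canon (S n) (conn T (stage T n) x) = canon n x.
Proof.
  simpl. destruct (excluded_middle_informative _) as [e|e]; [|destruct e; exists x; reflexivity].
  destruct (constructive_indefinite_description _ e) as [y Hy]; simpl.
  apply (emb_inj _ _ (cemb T (stage T n))) in Hy. subst; reflexivity.
Qed.

Lemma canon_self (a : BHcar T) : canon (idx a) (el a) = a.
Proof.
  destruct a as [[[|n] x] Hfresh]; simpl.
  - destruct Hfresh; reflexivity.
  - destruct (excluded_middle_informative _) as [e|ne].
    + exfalso; destruct e as [y Hy]; exact (Hfresh y Hy).
    +
    f_equal; apply proof_irrelevance.
Qed.

Lemma canon_lifts_eq n x k y : lifts T n x k y -> canon k y = canon n x.
Proof. induction 1 as [|k y _ IH]; [reflexivity | rewrite canon_conn; exact IH]. Qed.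

Lemma canon_inj n x y : canon n x = canon n y -> x = y.
Proof.
  intros E. pose proof (canon_lifts n y) as Hy. rewrite <- E in Hy.
  exact (lifts_uniq _ _ _ _ _ (canon_lifts n x) Hy).
Qed.

Lemma canon_surj (a : BHcar T) k : idx a <= k -> exists x : X k, canon k x = a.
Proof.
  intros Hk. destruct (lifts_ex _ (el a) k Hk) as [x Hx].
  exists x. rewrite (canon_lifts_eq _ _ _ _ Hx). apply canon_self.
Qed.

Lemma lifts_canon n x k y : n <= k -> canon k y = canon n x -> lifts T n x k y.
Proof.
  intros Hk E. destruct (lifts_ex n x k Hk) as [z Hz].
  replace y with z; [exact Hz|].
  apply canon_inj. rewrite E. exact (canon_lifts_eq _ _ _ _ Hz).
Qed.

Lemma BHlt_canon n x y : BHlt T (canon n x) (canon n y) <-> olt x y.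
Proof.
  split; [|intros Hxy; exists n, x, y; auto using canon_lifts].
  intros [k [x' [y' [Hx [Hy Hxy]]]]].
  apply canon_lifts_eq in Hx, Hy. rewrite canon_self in Hx, Hy.
  destruct (Nat.le_ge_cases n k) as [Hk|Hk].
  - apply (lifts_olt n x y k x' y'); auto using lifts_canon.
  - apply (lifts_olt k x' y' n x y); auto using lifts_canon.
Qed.

Lemma BH_linear : strict_linear (BHlt T).
Proof.
  split.
  - intros a. rewrite <- (canon_self a), BHlt_canon. apply (sl_irrefl (olt_linear _)).
  - intros a b c.
    remember (Nat.max (idx a) (Nat.max (idx b) (idx c))) as k eqn:Ek.
    assert (Ha : idx a <= k) by lia; assert (Hb : idx b <= k) by lia;
      assert (Hc : idx c <= k) by lia; clear Ek.
    destruct (canon_surj a k Ha) as [x <-], (canon_surj b k Hb) as [y <-],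
      (canon_surj c k Hc) as [z <-].
    rewrite !BHlt_canon. apply (sl_trans (olt_linear _)).
  - intros a b.
    remember (Nat.max (idx a) (idx b)) as k eqn:Ek.
    assert (Ha : idx a <= k) by lia; assert (Hb : idx b <= k) by lia; clear Ek.
    destruct (canon_surj a k Ha) as [x <-], (canon_surj b k Hb) as [y <-].
    rewrite !BHlt_canon.
    destruct (sl_total (olt_linear _) x y) as [h|[<-|h]]; auto.
Qed.

End DirectLimit.

Section Collapse.
Variable T : PraeDilator.
Notation X n := (gX T (stage T n)).
Notation idx a := (projT1 (proj1_sig a)).
Variable H : strict_linear (BHlt T).
Let BHL := @mkLO (BHcar T) (BHlt T) H.

Definition canon_emb n : emb (X n) BHL :=
  @mkEmb (X n) BHL (canon T n) (fun x y => iff_sym (BHlt_canon T n x y)).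

Lemma canon_emb_lift n d : emb_comp (canon_emb (d + n)) (lift T n d) = canon_emb n.
Proof. apply emb_eq; intros x; exact (canon_lifts_eq T _ _ _ _ (lifts_lift T n x d)). Qed.

Definition supp_stage (s : T BHL) : nat := maxl (map (fun a : BHL => idx a) (supp T s)).

Lemma supp_stage_ge (s : T BHL) (a : BHL) : In a (supp T s) -> idx a <= supp_stage s.
Proof. intros Ha. apply maxl_ge, in_map_iff; exists a; auto. Qed.

Lemma Tmap_canon_emb_range (s : T BHL) n :
  (forall a, In a (supp T s) -> idx a <= n) -> exists s', Tmap T (canon_emb n) s' = s.
Proof. intros Hb; apply Tmap_range; intros a Ha; exact (canon_surj T a n (Hb a Ha)). Qed.

Lemma Tmap_canon_emb_common (s t : T BHL) :
  exists n s' t', Tmap T (canon_emb n) s' = s /\ Tmap T (canon_emb n) t' = t.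
Proof.
  set (n := Nat.max (supp_stage s) (supp_stage t)).
  destruct (Tmap_canon_emb_range s n) as [s' Hs].
  { intros a Ha; pose proof (supp_stage_ge s a Ha); lia. }
  destruct (Tmap_canon_emb_range t n) as [t' Ht].
  { intros a Ha; pose proof (supp_stage_ge t a Ha); lia. }
  exists n, s', t'; auto.
Qed.

Definition phi n : T (X n) -> X (S n) :=
  proj1_sig (constructive_indefinite_description _
    (step_spec T (stage T n) (cemb T (stage T n)) (fun _ => eq_refl))).

Lemma phi_spec n :
  (forall x, conn T (stage T n) x = phi n (gio T (stage T n) x)) /\
  (forall s t, vrelS T (stage T n) s t <-> olt (phi n s) (phi n t)) /\
  (forall s, gio T (stage T (S n)) (phi n s) = Tmap T (cemb T (stage T n)) s).
Proof. unfold phi; destruct (constructive_indefinite_description _ _); assumption. Qed.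

Lemma BHlt_canon_phi n s t :
  BHlt T (canon T (S n) (phi n s)) (canon T (S n) (phi n t)) <-> vrelS T (stage T n) s t.
Proof. rewrite BHlt_canon. symmetry; apply (proj1 (proj2 (phi_spec n))). Qed.

Lemma BHlt_canon_phi_io n x s :
  BHlt T (canon T n x) (canon T (S n) (phi n s)) <->
  vrelS T (stage T n) (gio T (stage T n) x) s.
Proof. rewrite <- (canon_conn T n x), (proj1 (phi_spec n)). apply BHlt_canon_phi. Qed.

Lemma canon_phi_lift n s d :
  canon T (S (d + n)) (phi (d + n) (Tmap T (lift T n d) s)) = canon T (S n) (phi n s).
Proof.
  induction d as [|d IH].
  - change (lift T n 0) with (emb_id (X n)). rewrite Tmap_id; reflexivity.
  - change (lift T n (S d)) with (emb_comp (cemb T (stage T (d + n))) (lift T n d)).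
    rewrite Tmap_comp, <- (proj2 (proj2 (phi_spec (d + n)))), <- (proj1 (phi_spec (S (d + n)))).
    rewrite canon_conn; exact IH.
Qed.

Definition theta (s : T BHL) : BHL :=
  canon T (S (supp_stage s))
    (phi (supp_stage s) (proj1_sig (constructive_indefinite_description _
       (Tmap_canon_emb_range s (supp_stage s) (supp_stage_ge s))))).

Lemma canon_phi_indep n m s1 s2 : n <= m ->
  Tmap T (canon_emb n) s1 = Tmap T (canon_emb m) s2 ->
  canon T (S n) (phi n s1) = canon T (S m) (phi m s2).
Proof.
  intros Hnm E. assert (exists d, m = d + n) as [d ->] by (exists (m - n); lia).
  rewrite <- (canon_emb_lift n d), Tmap_comp in E.
  apply emb_inj in E; subst s2. symmetry; apply canon_phi_lift.
Qed.

Lemma theta_Tmap n s : theta (Tmap T (canon_emb n) s) = canon T (S n) (phi n s).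
Proof.
  unfold theta. destruct (constructive_indefinite_description _ _) as [s' E]; simpl.
  destruct (Nat.le_ge_cases n (supp_stage (Tmap T (canon_emb n) s))).
  - symmetry; apply canon_phi_indep; auto.
  - apply canon_phi_indep; auto.
Qed.

Lemma theta_collapse : BH_collapse T BHL theta.
Proof.
  split.
  - intros s t Hst Hsupp.
    destruct (Tmap_canon_emb_common s t) as [n [s' [t' [<- <-]]]].
    rewrite !theta_Tmap in *. apply BHlt_canon_phi.
    apply (vrel_unfold T _ _ _ (gs_L _ _ _ _ (ggood T (stage T n)))); left; split.
    + exact (proj2 (emb_spec (Tmap T (canon_emb n)) s' t') Hst).
    + intros x Hx. apply BHlt_canon_phi_io.
      destruct (Hsupp (canon_emb n x)) as [b [[<-|[]] Hb]]; [|exact Hb].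
      apply (supp_nat T); exists x; auto.
  - intros s a Ha. exists (theta s); split; [left; reflexivity|].
    destruct (Tmap_canon_emb_range s _ (supp_stage_ge s)) as [s' Es].
    rewrite <- Es in Ha |- *. rewrite theta_Tmap.
    apply (supp_nat T) in Ha; destruct Ha as [x [Hx <-]].
    apply BHlt_canon_phi_io, (vrel_supp T _ _ _ (gs_L _ _ _ _ (ggood T (stage T _)))), Hx.
Qed.

End Collapse.

Theorem theorem4p2 (T : PraeDilator) : BH_fixed_point T (BH T).
Proof.
  unfold BH. destruct (excluded_middle_informative (strict_linear (BHlt T))) as [H|H].
  - exists (theta T H). apply theta_collapse.
  - destruct (H (BH_linear T)).
Qed.
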